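(* Let $w=w_1\cdots w_n$ be a word of length $n\ge 2$ in which some letter $\mathrm{A}$ appears exactly $k$ times. Then $f(w)\ge 2k+1$. Further, if $w_i=w_{n-i+1}$ for every $i$ with $w_i=\mathrm{A}$, then $f(w)\ge 2k+2$.
   Context: A word of length $n$ is a sequence $w=w_1w_2\cdots w_n$ of letters (symbols). Let $[n]=\{1,\dots,n\}$. An $n$-grid is a function $G:[n]^2\to\Sigma$, where $\Sigma$ is an arbitrary set of letters. The $i$th row of $G$ contains $w$ if $G(i,j)=w_j$ for all $1\le j\le n$, or $G(i,j)=w_{n-j+1}$ for all $1\le j\le n$. The $j$th column contains $w$ if $G(i,j)=w_i$ for all $i$, or $G(i,j)=w_{n-i+1}$ for all $i$. The main diagonal contains $w$ if $G(i,i)=w_i$ for all $i$ or $G(i,i)=w_{n-i+1}$ for all $i$; the anti-diagonal contains $w$ if $G(i,n-i+1)=w_i$ for all $i$ or $G(i,n-i+1)=w_{n-i+1}$ for all $i$. Let $f(w,G)$ be the number of the $2n+2$ lines ($n$ rows, $n$ columns, $2$ diagonals) of $G$ that contain $w$, and $f(w)=\max_G f(w,G)$ over all $n$-grids $G$. *)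

(* Words of length n over an alphabet T are functions 'I_n -> T;
   index i : 'I_n stands for position i+1, and rev_ord i for position n-i. *)
From mathcomp Require Import all_boot all_order.
Set Implicit Arguments. Unset Strict Implicit. Unset Printing Implicit Defensive.

Section Grid.
Variables (T : eqType) (n : nat).

Definition grid := 'I_n -> 'I_n -> T.

Definition line_contains (w : 'I_n -> T) (l : 'I_n -> T) : bool :=
  [forall j, l j == w j] || [forall j, l j == w (rev_ord j)].

Definition row_contains w (G : grid) (i : 'I_n) := line_contains w (fun j => G i j).
Definition col_contains w (G : grid) (j : 'I_n) := line_contains w (fun i => G i j).
Definition diag_contains w (G : grid) := line_contains w (fun i => G i i).
Definition antidiag_contains w (G : grid) := line_contains w (fun i => G i (rev_ord i)).

Definition fwG (w : 'I_n -> T) (G : grid) : nat :=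
  #|[set i | row_contains w G i]| + #|[set j | col_contains w G j]|
  + diag_contains w G + antidiag_contains w G.

End Grid.

(* Put w in every row indexed by an occurrence of A and fill every other row i
   with the constant letter w_i.  Then the column of each occurrence j of A reads
   w_1 ... w_n (its cells in the w-rows hold w_j = A = w_i), and so does the main
   diagonal.  This gives k rows, k columns and a diagonal; when w_i = w_(n-i+1) at
   every occurrence of A, the anti-diagonal reads w as well.  The construction
   works for every n. *)
From mathcomp Require Import all_boot all_order.

Set Implicit Arguments. Unset Strict Implicit. Unset Printing Implicit Defensive.

Section LineCounting.
Variables (T : eqType) (n : nat) (w : 'I_n -> T).

Lemma line_contains_eq (l : 'I_n -> T) : l =1 w -> line_contains w l.
Proof. by move=> lw; apply/orP; left; apply/forallP => j; rewrite lw. Qed.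

Lemma fwG_ge_rows_cols (G : grid T n) (P : {set 'I_n}) :
    {in P, forall i, row_contains w G i} -> {in P, forall j, col_contains w G j} ->
  #|P| + #|P| + diag_contains w G + antidiag_contains w G <= fwG w G.
Proof.
move=> rowsP colsP; rewrite /fwG !leq_add2r.
apply: leq_add; apply: subset_leq_card; apply/subsetP => i Pi; rewrite inE.
  exact: rowsP.
exact: colsP.
Qed.

End LineCounting.

Section MarkedGrid.
Variables (T : eqType) (n : nat) (w : 'I_n -> T) (A : T).

Definition marked_grid : grid T n := fun i j => if w i == A then w j else w i.

Lemma row_contains_marked i : w i = A -> row_contains w marked_grid i.
Proof. by move=> wiA; apply: line_contains_eq => j; rewrite /marked_grid wiA eqxx. Qed.

Lemma col_contains_marked j : w j = A -> col_contains w marked_grid j.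
Proof.
by move=> wjA; apply: line_contains_eq => i; rewrite /marked_grid; case: eqP => [->|].
Qed.

Lemma diag_contains_marked : diag_contains w marked_grid.
Proof. by apply: line_contains_eq => i; rewrite /marked_grid; case: ifP. Qed.

Lemma antidiag_contains_marked :
  (forall i, w i = A -> w i = w (rev_ord i)) -> antidiag_contains w marked_grid.
Proof.
move=> symA; apply: line_contains_eq => i; rewrite /marked_grid.
by case: eqP => [/symA|].
Qed.

Lemma fwG_marked_grid :
  2 * #|[set i | w i == A]| + 1 + antidiag_contains w marked_grid <= fwG w marked_grid.
Proof.
set P := [set i | w i == A].
have rowsP : {in P, forall i, row_contains w marked_grid i}.
  by move=> i; rewrite inE => /eqP; apply: row_contains_marked.
have colsP : {in P, forall j, col_contains w marked_grid j}.
  by move=> j; rewrite inE => /eqP; apply: col_contains_marked.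
by rewrite mul2n -addnn; have := fwG_ge_rows_cols rowsP colsP; rewrite diag_contains_marked.
Qed.

End MarkedGrid.

Theorem lemma9 (T : eqType) (n : nat) (w : 'I_n -> T) (A : T) (k : nat) :
  2 <= n ->
  #|[set i | w i == A]| = k ->
  (exists G : grid T n, 2 * k + 1 <= fwG w G) /\
  ((forall i : 'I_n, w i = A -> w i = w (rev_ord i)) ->
   exists G : grid T n, 2 * k + 2 <= fwG w G).
Proof.
move=> _ cardA; have := fwG_marked_grid w A; rewrite cardA => bound.
split=> [|symA]; exists (marked_grid w A).
  exact: leq_trans (leq_addr _ _) bound.
by move: bound; rewrite antidiag_contains_marked // -addnA.
Qed.
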